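(* Let $\mathcal{A},\mathcal{B}$ be standard operator algebras on infinite-dimensional Banach spaces $\mathcal{X},\mathcal{Y}$, and let $\phi:\mathcal{A}\to\mathcal{B}$ be a bijection that is 2-quadratic preserving in both directions and satisfies $\phi(I)=I$. Then $\phi$ preserves orthogonality of idempotents in both directions: for idempotents $P,Q\in\mathcal{A}$, $PQ=QP=0$ if and only if $\phi(P)\phi(Q)=\phi(Q)\phi(P)=0$.
   Context: A standard operator algebra on $\mathcal{X}$ is a norm-closed subalgebra of $\mathcal{B}(\mathcal{X})$ containing the identity $I$ and all finite-rank operators. An operator $T$ is quadratic if there exist scalars $a,b$ with $(T-aI)(T-bI)=0$. $\phi_2((a_{ij})_{2\times 2})=(\phi(a_{ij}))_{2\times 2}$, and ''2-quadratic preserving in both directions'' means $T\in\mathcal{A}\otimes M_2$ is quadratic iff $\phi_2(T)$ is quadratic. Idempotents $P,Q$ are orthogonal if $PQ=QP=0$. *)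

From HB Require Import structures.
From mathcomp Require Import all_boot all_order all_algebra.
From mathcomp Require Import all_classical all_reals all_analysis.
From mathcomp Require Import complex.
Set Implicit Arguments. Unset Strict Implicit. Unset Printing Implicit Defensive.
Import Order.TTheory GRing.Theory Num.Theory.
Import numFieldNormedType.Exports.
Local Open Scope classical_set_scope.
Local Open Scope ring_scope.

Section Ops.
Variables (K : numFieldType) (X : normedModType K).

(* Operators are functions X -> X; B(X) = linear continuous maps. *)
Definition lin_op (T : X -> X) : Prop :=
  forall (a : K) (u v : X), T (a *: u + v) = a *: T u + T v.

Definition bounded_op (T : X -> X) : Prop := lin_op T /\ continuous T.

Definition in_span (s : seq X) (x : X) : Prop :=
  exists c : 'I_(size s) -> K, x = \sum_(i < size s) c i *: s`_i.

Definition finite_rank (T : X -> X) : Prop :=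
  exists s : seq X, forall x, in_span s (T x).

Definition infinite_dim : Prop :=
  forall s : seq X, exists x : X, ~ in_span s x.

(* A is closed in the operator-norm topology of B(X) *)
Definition norm_closed (A : set (X -> X)) : Prop :=
  forall T, bounded_op T ->
    (forall e : K, 0 < e -> exists2 S, A S &
        forall x, `|T x - S x| <= e * `|x|) ->
    A T.

Definition standard_operator_algebra (A : set (X -> X)) : Prop :=
  [/\ (forall T, A T -> bounded_op T),
      A id,
      (forall S T, A S -> A T -> A (fun x => S x + T x)),
      (forall (a : K) T, A T -> A (fun x => a *: T x)) &
      (forall S T, A S -> A T -> A (S \o T))] /\
  (forall T, bounded_op T -> finite_rank T -> A T) /\
  norm_closed A.

(* 2x2 operator matrices: elements of B(X) (x) M_2, acting on X (+) X *)
Definition opmx2 := 'I_2 -> 'I_2 -> X -> X.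

Definition shift2 (T : opmx2) (a : K) : opmx2 :=
  fun i j x => T i j x - (if i == j then a *: x else 0).

Definition mul2 (S T : opmx2) : opmx2 :=
  fun i j x => \sum_(k < 2) S i k (T k j x).

Definition quadratic2 (T : opmx2) : Prop :=
  exists a b : K, forall i j x, mul2 (shift2 T a) (shift2 T b) i j x = 0.

Definition in_alg2 (A : set (X -> X)) (T : opmx2) : Prop :=
  forall i j, A (T i j).

Definition idempotent_opr (P : X -> X) : Prop := P \o P = P.

End Ops.

Definition phi2 (K : numFieldType) (X Y : normedModType K)
  (phi : (X -> X) -> (Y -> Y)) (T : opmx2 X) : opmx2 Y :=
  fun i j => phi (T i j).

From HB Require Import structures.
From mathcomp Require Import all_boot all_order all_algebra.
From mathcomp Require Import all_classical all_reals all_analysis.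
From mathcomp Require Import complex.
From mathcomp Require Import ring lra.
Import Order.TTheory GRing.Theory Num.Theory.
Import numFieldNormedType.Exports.
Local Open Scope classical_set_scope.
Local Open Scope ring_scope.

(* Everything is read off 2x2 operator matrices, through three test matrices:
   - [[T, 1], [1, T]] is quadratic iff T is a scalar;
   - for orthogonal P, Q the matrix [[1, P], [Q, 1]] is quadratic, and if it
     is quadratic then PQ = QP = t is a scalar;
   - for an idempotent E, [[E, E], [E, E]] is quadratic, and if it is
     quadratic then E acts as a scalar on its range.
   Since phi_2 preserves quadraticity both ways and phi 1 = 1, phi preserves
   and reflects scalars, and phi 0 = 0: the latter needs a non-scalar element
   of a standard operator algebra, i.e. a nonzero rank-one operator, whose
   construction requires a bounded functional (Hahn-Banach, proved below by
   Zorn's lemma for real functionals and then complexified).  Finally,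
   orthogonality of P, Q on one side gives PQ = QP = t on the other side,
   and t != 0 forces P, Q (or phi P, phi Q) to be scalars or the identity,
   which is incompatible with orthogonality on the first side. *)

Section BlockMatrices.
Variables (K : numFieldType) (V : normedModType K).

Definition scalar_op (T : V -> V) : Prop := exists l : K, forall x, T x = l *: x.

Definition mk2 (E F G H : V -> V) : opmx2 V :=
  fun i j => if i == ord0 then (if j == ord0 then E else F)
             else (if j == ord0 then G else H).

Lemma quadratic_mk2 E F G H :
  quadratic2 (mk2 E F G H) <-> exists a b : K, forall x,
   [/\ E (E x - b *: x) - a *: (E x - b *: x) + F (G x) = 0,
       E (F x) - a *: F x + F (H x - b *: x) = 0,
       G (E x - b *: x) + (H (G x) - a *: G x) = 0 &
       G (F x) + (H (H x - b *: x) - a *: (H x - b *: x)) = 0].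
Proof.
rewrite /quadratic2 /mul2 /shift2 /mk2.
split=> -[a [b h]]; exists a, b; last move=> i j x.
  move=> x; have := h ord0 ord0 x; have := h ord0 ord_max x.
  have := h ord_max ord0 x; have := h ord_max ord_max x.
  by rewrite !big_ord_recl !big_ord0 /= !subr0 !addr0.
have [h00 h01 h10 h11] := h x; rewrite !big_ord_recl big_ord0 /= addr0.
by case: i => [[|[|//]]] ?; case: j => [[|[|//]]] ? /=; rewrite ?subr0.
Qed.

Lemma lin_op0 {T : V -> V} : lin_op T -> T 0 = 0.
Proof.
move=> linT; have := linT 1 0 0; rewrite !scale1r addr0 => e.
by apply: (addrI (T 0)); rewrite addr0 -e.
Qed.

Lemma lin_opZ {T : V -> V} : lin_op T -> forall a u, T (a *: u) = a *: T u.
Proof. by move=> linT a u; rewrite -[a *: u]addr0 linT lin_op0 ?addr0. Qed.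

Lemma lin_opB {T : V -> V} : lin_op T -> forall u v, T (u - v) = T u - T v.
Proof. by move=> linT u v; rewrite -scaleN1r addrC linT scaleN1r addrC. Qed.

(* Rewrites a linear combination of multiples of x as a single c *: x. *)
Ltac collect_scalars x := rewrite -[x]scale1r;
  repeat first [rewrite (@scalerBr _ V) | rewrite (@scalerDr _ V)
   | rewrite (@scalerA _ V) | rewrite -(@scaleNr _ V) | rewrite -(@scalerDl _ V)].

Ltac zero_coefficient :=
  match goal with |- ?c *: _ = 0 => have -> : c = 0 by ring end; by rewrite scale0r.

(* [[l, 1], [1, l]] = l + J with J^2 = 1 is annihilated by (M - l - 1)(M - l + 1). *)
Lemma scalar_block_quadratic (l : K) :
  quadratic2 (mk2 (fun x => l *: x) id id (fun x => l *: x)).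
Proof.
apply/quadratic_mk2; exists (l + 1), (l - 1) => x /=.
by split; collect_scalars x; zero_coefficient.
Qed.

(* Conversely, if [[T, 1], [1, T]] is quadratic then T is a scalar:
   the off-diagonal entry of (M - a)(M - b) is 2T - (a + b). *)
Lemma block_quadratic_scalar T : quadratic2 (mk2 T id id T) -> scalar_op T.
Proof.
move=> /quadratic_mk2 [a [b h]]; exists ((a + b) / 2) => x.
have [_ /= h01 _ _] := h x.
have twoT : 2 *: T x = (a + b) *: x.
  apply/eqP; rewrite -subr_eq0 -h01.
  by rewrite !scalerDl !scale1r opprD addrACA.
by rewrite [(a + b) / 2]mulrC -scalerA -twoT scalerA mulVf ?scale1r.
Qed.

(* Orthogonal P, Q make [[1, P], [Q, 1]] quadratic: it is a root of (M - 1)^2. *)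
Lemma orth_block_quadratic (P Q : V -> V) : lin_op P -> lin_op Q ->
  (forall x, P (Q x) = 0) -> (forall x, Q (P x) = 0) ->
  quadratic2 (mk2 id P Q id).
Proof.
move=> linP linQ PQ QP; apply/quadratic_mk2; exists 1, 1 => x /=.
by split; rewrite !scale1r ?subrr ?PQ ?QP ?addr0 ?add0r //; exact: lin_op0.
Qed.

(* If [[1, P], [Q, 1]] is quadratic then PQ and QP are the same scalar t:
   the diagonal entries of (M - a)(M - b) are PQ - t and QP - t. *)
Lemma block_quadratic_orth (P Q : V -> V) : quadratic2 (mk2 id P Q id) ->
  exists t : K, forall x, P (Q x) = t *: x /\ Q (P x) = t *: x.
Proof.
move=> /quadratic_mk2 [a [b h]]; exists (- ((1 - b) - a * (1 - b))) => x.
have [/= h00 _ _ h11] := h x.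
have diag : x - b *: x - a *: (x - b *: x) = ((1 - b) - a * (1 - b)) *: x.
  by collect_scalars x; congr (_ *: _); ring.
rewrite diag in h00 h11; rewrite scaleNr; split; apply/eqP.
  by rewrite -subr_eq0 opprK addrC h00.
by rewrite -subr_eq0 opprK h11.
Qed.

Lemma idempotent_oprP (E : V -> V) : idempotent_opr E -> forall x, E (E x) = E x.
Proof. by move=> EE x; rewrite -[in RHS]EE. Qed.

(* For an idempotent E, M = [[E, E], [E, E]] satisfies M^2 = 2M,
   so it is annihilated by M(M - 2). *)
Lemma idempotent_block_quadratic (E : V -> V) : idempotent_opr E ->
  quadratic2 (mk2 E E E E).
Proof.
move=> /idempotent_oprP EE; apply/quadratic_mk2; exists 2, 0 => x /=.
by split; rewrite !scale0r !subr0 !EE; collect_scalars (E x); zero_coefficient.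
Qed.

(* If [[T, T], [T, T]] is quadratic, T acts as a scalar c on its range:
   the off-diagonal entry of (M - a)(M - b) is 2T^2 - (a + b)T. *)
Lemma block_quadratic_range_scalar (T : V -> V) : lin_op T ->
  quadratic2 (mk2 T T T T) -> exists c : K, forall x, T (T x) = c *: T x.
Proof.
move=> linT /quadratic_mk2 [a [b h]]; exists ((a + b) / 2) => x.
have [_ /= h01 _ _] := h x; rewrite (lin_opB linT) (lin_opZ linT) in h01.
have twoT : 2 *: T (T x) = (a + b) *: T x.
  apply/eqP; rewrite -subr_eq0 -h01.
  by rewrite !scalerDl !scale1r opprD addrACA.
by rewrite [(a + b) / 2]mulrC -scalerA -twoT scalerA mulVf ?scale1r.
Qed.

Lemma range_scalar_surjective (U W : V -> V) (c t : K) : t != 0 ->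
  (forall x, U (U x) = c *: U x) -> (forall x, U (W x) = t *: x) ->
  forall x, U x = c *: x.
Proof.
move=> t0 UU UW x.
have UWx : U (W (t^-1 *: x)) = x by rewrite UW scalerA mulfV ?scale1r.
by rewrite -{1}UWx UU UWx.
Qed.

Lemma orth_scalar_zero (P Q : V -> V) (l m : K) (x0 : V) : x0 != 0 ->
  (forall x, P x = l *: x) -> (forall x, Q x = m *: x) -> P (Q x0) = 0 ->
  P = (fun x => 0 *: x) \/ Q = (fun x => 0 *: x).
Proof.
move=> x0_neq0 Pl Qm /eqP; rewrite Qm Pl scalerA scaler_eq0 (negbTE x0_neq0) orbF.
by rewrite mulf_eq0 => /orP[] /eqP lm0; [left | right];
  apply: funext => x; rewrite ?Pl ?Qm lm0.
Qed.

End BlockMatrices.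
Arguments scalar_op {K V}. Arguments mk2 {K V}.
Arguments lin_op0 {K V T}. Arguments lin_opZ {K V T}. Arguments lin_opB {K V T}.
Arguments scalar_block_quadratic {K V}. Arguments block_quadratic_scalar {K V T}.
Arguments orth_block_quadratic {K V P Q}. Arguments block_quadratic_orth {K V P Q}.
Arguments idempotent_oprP {K V E}. Arguments idempotent_block_quadratic {K V E}.
Arguments block_quadratic_range_scalar {K V T}.
Arguments range_scalar_surjective {K V U W c t}.
Arguments orth_scalar_zero {K V P Q l m x0}.

Local Open Scope complex_scope.

Section RealNorm.
Variables (R : realType) (X : normedModType (R[i])%C).

(* The norm of a complex normed space takes real values; rnorm x is the
   norm as an element of R, so that real-variable arguments (sup, lra) apply. *)
Definition rnorm (x : X) : R := complex.Re `|x|.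

Lemma normcR (r : R) : `|r%:C| = `|r|%:C.
Proof. by rewrite normc_def /= expr0n /= addr0 sqrtr_sqr. Qed.

Lemma normci : `|'i : R[i]| = 1.
Proof. by rewrite normc_def /= expr0n /= expr1n add0r sqrtr1. Qed.

Lemma rnormE x : `|x| = (rnorm x)%:C.
Proof. by rewrite /rnorm RRe_real ?normr_real. Qed.

Lemma rnorm_ge0 x : 0 <= rnorm x.
Proof. by rewrite -ler0c -rnormE normr_ge0. Qed.

Lemma rnorm_gt0 x : x != 0 -> 0 < rnorm x.
Proof. by move=> x0; rewrite -ltcR -rnormE normr_gt0. Qed.

Lemma rnorm0 : rnorm 0 = 0.
Proof. by rewrite /rnorm normr0. Qed.

Lemma rnormD x y : rnorm (x + y) <= rnorm x + rnorm y.
Proof. by have := ler_normD x y; rewrite !rnormE lecE /= => /andP[]. Qed.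

Lemma rnormZ (r : R) x : rnorm (r%:C *: x) = `|r| * rnorm x.
Proof. by apply: complexI; rewrite -rnormE normrZ normcR rnormE rmorphM. Qed.

Lemma rnormN x : rnorm (- x) = rnorm x.
Proof. by rewrite /rnorm normrN. Qed.

Lemma rnormi x : rnorm ('i *: x) = rnorm x.
Proof. by rewrite /rnorm normrZ normci mul1r. Qed.

End RealNorm.
Arguments rnorm {R X}.
Arguments rnormE {R X}. Arguments rnorm_ge0 {R X}. Arguments rnorm_gt0 {R X}.
Arguments rnorm0 {R X}. Arguments rnormD {R X}. Arguments rnormZ {R X}.
Arguments rnormN {R X}. Arguments rnormi {R X}.

(* Partial functionals are
   handled through their graphs and maximised with Zorn's lemma. *)
Section HahnBanach.
Variables (R : realType) (X : normedModType (R[i])%C) (x0 : X).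

Definition graph_linear (G : set (X * R)) := forall (r : R) u v a b,
  G (u, a) -> G (v, b) -> G (r%:C *: u + v, r * a + b).

Definition graph_dominated (G : set (X * R)) := forall u a, G (u, a) -> a <= rnorm u.

Definition line_graph : set (X * R) :=
  [set z | exists r : R, z = (r%:C *: x0, r * rnorm x0)].

Definition admissible G := [/\ graph_linear G, graph_dominated G & line_graph `<=` G].

Lemma admissible_origin {G} : admissible G -> G (0, 0).
Proof. by case=> _ _ sub; apply: sub; exists 0; rewrite rmorph0 scale0r mul0r. Qed.

Lemma admissible_scale {G} : admissible G ->
  forall (r : R) u a, G (u, a) -> G (r%:C *: u, r * a).
Proof.
move=> GA r u a Gu; have [lin _ _] := GA.
by have := lin r u 0 a 0 Gu (admissible_origin GA); rewrite !addr0.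
Qed.

Lemma admissible_functional {G} : admissible G ->
  forall u a b, G (u, a) -> G (u, b) -> a = b.
Proof.
move=> [lin dom _] u a b Ga Gb.
have := dom _ _ (lin (-1) u u a b Ga Gb); have := dom _ _ (lin (-1) u u b a Gb Ga).
by rewrite rmorphN1 scaleN1r addNr rnorm0 !mulN1r; lra.
Qed.

Lemma admissible_line_graph : admissible line_graph.
Proof.
split=> //.
- move=> r _ _ _ _ [r1 [-> ->]] [r2 [-> ->]]; exists (r * r1 + r2).
  congr pair; last by ring.
  by rewrite scalerA -rmorphM -scalerDl -rmorphD.
- move=> _ _ [r [-> ->]]; rewrite rnormZ.
  by apply: ler_wpM2r; [exact: rnorm_ge0 | exact: ler_norm].
Qed.

Definition extension (M : set (X * R)) (x1 : X) (c : R) : set (X * R) :=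
  [set w | exists t y s, M (y, s) /\ w = (y + t%:C *: x1, s + t * c)].

(* The value c may be chosen between the sup of s - |y - x1| and the inf of
   |z + x1| - u over the graph; these are ordered by the triangle inequality. *)
Lemma extension_value {M} x1 : admissible M -> exists c : R,
  (forall y s, M (y, s) -> s - rnorm (y - x1) <= c) /\
  (forall z u, M (z, u) -> c <= rnorm (z + x1) - u).
Proof.
move=> MA; have [lin dom _] := MA.
pose L := [set l | exists y s, M (y, s) /\ l = s - rnorm (y - x1)].
have sep y s z u : M (y, s) -> M (z, u) -> s - rnorm (y - x1) <= rnorm (z + x1) - u.
  move=> My Mz; have := dom _ _ (lin 1 y z s u My Mz).
  rewrite rmorph1 scale1r mul1r.
  have := rnormD (y - x1) (z + x1); rewrite addrACA addNr addr0; lra.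
have M0 := admissible_origin MA.
have L0 : L !=set0 by exists (0 - rnorm (0 - x1)), 0, 0.
have Lub : ubound L (rnorm (0 + x1) - 0) by move=> _ [y [s [My ->]]]; exact: sep.
exists (sup L); split=> [y s My | z u Mz].
  by apply: ub_le_sup; [exists (rnorm (0 + x1) - 0) | exists y, s].
by apply: ge_sup => // _ [y [s [My ->]]]; exact: sep.
Qed.

(* With such a c the extension stays dominated: scale by |t| and compare. *)
Lemma extension_dominated M x1 c : admissible M ->
  (forall y s, M (y, s) -> s - rnorm (y - x1) <= c) ->
  (forall z u, M (z, u) -> c <= rnorm (z + x1) - u) ->
  graph_dominated (extension M x1 c).
Proof.
move=> MA lo hi _ _ [t [y [s [My [-> ->]]]]].
have [_ dom _] := MA.
case: (ltgtP t 0) => [tn|tp|->]; last first.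
- by rewrite rmorph0 scale0r addr0 mul0r addr0; exact: dom.
- have e : y + t%:C *: x1 = t%:C *: (t^-1%:C *: y + x1).
    by rewrite scalerDr scalerA -rmorphM mulfV ?gt_eqF // rmorph1 scale1r.
  have := hi _ _ (admissible_scale MA (t^-1) _ _ My).
  rewrite -(ler_pM2l tp) mulrBr mulrA mulfV ?gt_eqF // mul1r.
  by rewrite e rnormZ gtr0_norm //; lra.
- have tp : 0 < - t by rewrite oppr_gt0.
  have e : y + t%:C *: x1 = (- t)%:C *: ((- t)^-1%:C *: y - x1).
    rewrite scalerBr scalerA -rmorphM mulfV ?lt0r_neq0 //.
    by rewrite rmorph1 scale1r rmorphN scaleNr opprK.
  have := lo _ _ (admissible_scale MA ((- t)^-1) _ _ My).
  rewrite -(ler_pM2l tp) mulrBr mulrA mulfV ?gt_eqF // mul1r.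
  by rewrite e rnormZ gtr0_norm //; lra.
Qed.

Lemma admissible_extend M x1 : admissible M -> ~ (exists a, M (x1, a)) ->
  exists M', admissible M' /\ M `<` M'.
Proof.
move=> MA nx1; have [lin _ line] := MA.
have [c [lo hi]] := extension_value x1 MA.
have MM' : M `<=` extension M x1 c.
  move=> [y s] My; exists 0, y, s; split=> //.
  by rewrite rmorph0 scale0r addr0 mul0r addr0.
exists (extension M x1 c); split; last first.
  split=> // sub; apply: nx1; exists c; apply: sub.
  exists 1, 0, 0; split; first exact: admissible_origin.
  by rewrite rmorph1 scale1r add0r mul1r add0r.
split; last 1 [exact: extension_dominated | exact: subset_trans line MM'].
move=> r _ _ _ _ [t1 [y1 [s1 [M1 [-> ->]]]]] [t2 [y2 [s2 [M2 [-> ->]]]]].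
exists (r * t1 + t2), (r%:C *: y1 + y2), (r * s1 + s2); split; first exact: lin.
congr pair; last by ring.
by rewrite scalerDr scalerA -rmorphM rmorphD scalerDl addrACA.
Qed.

Lemma admissible_chain (F : set (set (X * R))) :
  F `<=` (fun G => G = set0 \/ admissible G) -> total_on F subset ->
  (fun G => G = set0 \/ admissible G) (\bigcup_(G in F) G).
Proof.
move=> FP Ftot.
have [[G1 [FG1 [w1 G1w1]]] | none] := pselect (exists G, F G /\ G !=set0); last first.
  left; apply/seteqP; split=> w // [G FG Gw]; apply: none.
  by exists G; split=> //; exists w.
have adm G w : F G -> G w -> admissible G.
  by move=> FG Gw; case: (FP _ FG) => // e; rewrite e in Gw.
right; split.
- move=> r u v a b [G FG Gu] [H FH Hv]; case: (Ftot G H FG FH) => sub.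
    by exists H => //; have [lin _ _] := adm _ _ FH Hv; apply: lin => //; exact: sub.
  by exists G => //; have [lin _ _] := adm _ _ FG Gu; apply: lin => //; exact: sub.
- by move=> u a [G FG Gu]; have [_ dom _] := adm _ _ FG Gu; exact: dom.
- by move=> w line_w; exists G1 => //; have [_ _ line] := adm _ _ FG1 G1w1; exact: line.
Qed.

(* Real Hahn-Banach: a maximal admissible graph (Zorn) is total. *)
Lemma real_hahn_banach : exists g : X -> R,
  [/\ forall (r : R) u v, g (r%:C *: u + v) = r * g u + g v,
      forall x, g x <= rnorm x & g x0 = rnorm x0].
Proof.
have [M [PM maxM]] := Zorn_bigcup admissible_chain.
have line_x0 : line_graph (x0, rnorm x0) by exists 1; rewrite rmorph1 scale1r mul1r.
have MA : admissible M.
  case: PM => // M0; exfalso; apply: (maxM line_graph); last first.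
    by right; exact: admissible_line_graph.
  by rewrite M0; split=> // sub; exact: sub _ line_x0.
have total x : exists a, M (x, a).
  apply: contrapT => nx; have [M' [M'A lt]] := admissible_extend _ _ MA nx.
  exact: maxM M' lt (or_intror M'A).
have [g Mg] := choice total; have [lin dom line] := MA.
exists g; split=> [r u v | x |].
- exact: admissible_functional MA _ _ _ (Mg _) (lin _ _ _ _ _ (Mg u) (Mg v)).
- exact: dom.
- exact: admissible_functional MA _ _ _ (Mg x0) (line _ line_x0).
Qed.

End HahnBanach.
Arguments real_hahn_banach {R X}.

Section Complexification.
Variables (R : realType) (X : normedModType (R[i])%C) (g : X -> R).
Hypothesis g_linear : forall (r : R) u v, g (r%:C *: u + v) = r * g u + g v.

Definition complexify (x : X) : R[i] := (g x)%:C - 'i * (g ('i *: x))%:C.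

Lemma complexify_linear a u v :
  complexify (a *: u + v) = a * complexify u + complexify v.
Proof.
have g0 : g 0 = 0 by have := g_linear 1 0 0; rewrite scaler0 addr0 mul1r; lra.
have g_split b w z :
    g (b *: w + z) = complex.Re b * g w + complex.Im b * g ('i *: w) + g z.
  have -> : b *: w = (complex.Re b)%:C *: w + (complex.Im b)%:C *: ('i *: w).
    by rewrite scalerA (mulrC _ 'i) -scalerDl -complexE.
  by rewrite -addrA !g_linear addrA.
have g_ii w : g ('i *: ('i *: w)) = - g w.
  rewrite scalerA -expr2 sqr_i -(rmorphN1 (real_complex R)) -[_ *: w]addr0.
  by rewrite g_linear g0 addr0 mulN1r.
rewrite /complexify; have -> : 'i *: (a *: u + v) = a *: ('i *: u) + 'i *: v.
  by rewrite scalerDr !scalerA mulrC.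
rewrite !g_split g_ii.
case: a => al be /=; apply/eqP; rewrite eq_complex /=.
by apply/andP; split; apply/eqP; ring.
Qed.

(* If g is dominated by the norm so is |g|, hence |f u| <= 2 |u|. *)
Lemma complexify_bounded : (forall x, g x <= rnorm x) ->
  forall u, `|complexify u| <= 2 * `|u|.
Proof.
move=> g_le u.
have gN w : g (- w) = - g w.
  have g0 : g 0 = 0 by have := g_linear 1 0 0; rewrite scaler0 addr0 mul1r; lra.
  by have := g_linear (-1) w 0; rewrite rmorphN1 scaleN1r addr0 mulN1r g0 addr0.
have g_abs w : `|g w| <= rnorm w.
  by rewrite ler_norml g_le andbT -rnormN lerNl -gN; exact: g_le.
rewrite /complexify (le_trans (ler_normB _ _)) //.
rewrite normrM normci mul1r !normcR rnormE mulr2n mulrDl mul1r.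
by apply: lerD; rewrite lecR // -(rnormi u).
Qed.

End Complexification.
Arguments complexify {R X}.
Arguments complexify_linear {R X g}. Arguments complexify_bounded {R X g}.

Lemma bounded_functional {R : realType} {X : normedModType (R[i])%C} {x0 : X} :
  x0 != 0 -> exists f : X -> R[i],
  [/\ forall a u v, f (a *: u + v) = a * f u + f v,
      forall u, `|f u| <= 2 * `|u| & f x0 != 0].
Proof.
move=> x0_neq0; have [g [g_lin g_le g_x0]] := real_hahn_banach x0.
exists (complexify g); split.
- exact: complexify_linear.
- exact: complexify_bounded.
- apply/eqP => f0; have := congr1 (@complex.Re R) f0; rewrite /complexify /= g_x0.
  by have := rnorm_gt0 _ x0_neq0; lra.
Qed.

Section RankOne.
Variables (R : realType) (X : normedModType (R[i])%C).

Lemma nonzero_vector : infinite_dim X -> exists x0 : X, x0 != 0.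
Proof.
move=> infX; have [x nx] := infX [::]; exists x; apply/eqP => x0; apply: nx.
by exists (fun _ => 0); rewrite x0 big_ord0.
Qed.

(* The rank-one operator x |-> f x *: x0 of a bounded linear functional f
   is bounded: it is Lipschitz with constant 2 |x0|. *)
Lemma rank_one_bounded (f : X -> R[i]) (x0 : X) :
  (forall a u v, f (a *: u + v) = a * f u + f v) ->
  (forall u, `|f u| <= 2 * `|u|) -> bounded_op (fun x => f x *: x0).
Proof.
move=> f_lin f_le; split=> [a u v | x]; first by rewrite f_lin scalerDl scalerA.
have lip z : `|f x *: x0 - f z *: x0| <= 2 * `|x0| * `|x - z|.
  rewrite -scalerBl; have -> : f x - f z = f (x - z).
    by rewrite addrC -[- z]scaleN1r [x + _]addrC f_lin mulN1r.
  by rewrite normrZ mulrAC; apply: ler_wpM2r => //; exact: f_le.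
apply/(@cvgrPdist_lt _ _ _ (nbhs x)) => e e_gt0.
have k_gt0 : 0 < 2 * `|x0| + 1 by rewrite ltr_wpDl // mulr_ge0.
near=> z; rewrite (le_lt_trans (lip z)) //.
rewrite (le_lt_trans (ler_wpM2r (normr_ge0 (x - z)) (ler_wpDr ler01 (lexx _)))) //.
rewrite -ltr_pdivlMl //.
by near: z; apply: cvgr_dist_lt => //; rewrite mulr_gt0 // invr_gt0.
Unshelve. all: by end_near.
Qed.

(* On an infinite-dimensional space a nonzero rank-one operator is not a
   scalar, so every standard operator algebra contains a non-scalar element. *)
Lemma standard_algebra_nonscalar (A : set (X -> X)) : infinite_dim X ->
  standard_operator_algebra A -> exists2 N, A N & ~ scalar_op N.
Proof.
move=> infX [_ [A_fr _]].
have [x0 x0_neq0] := nonzero_vector infX.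
have [f [f_lin f_le fx0]] := bounded_functional x0_neq0.
exists (fun x => f x *: x0).
  apply: A_fr; first exact: rank_one_bounded.
  by exists [:: x0] => x; exists (fun _ => f x); rewrite big_ord1.
move=> [l Nl].
have l_neq0 : l != 0.
  apply: contraNneq fx0 => l0; have /eqP := Nl x0.
  by rewrite l0 scale0r scaler_eq0 (negbTE x0_neq0) orbF.
have [x nx] := infX [:: x0]; apply: nx.
exists (fun _ => l^-1 * f x); rewrite big_ord1 /= -scalerA Nl scalerA.
by rewrite mulVf // scale1r.
Qed.

End RankOne.
Arguments nonzero_vector {R X}. Arguments standard_algebra_nonscalar {R X A}.

Section Preserver.
Variables (R : realType) (X Y : completeNormedModType (R[i])%C).
Variables (A : set (X -> X)) (B : set (Y -> Y)) (phi : (X -> X) -> (Y -> Y)).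
Hypotheses (infX : infinite_dim X) (infY : infinite_dim Y).
Hypotheses (A_std : standard_operator_algebra A) (B_std : standard_operator_algebra B).
Hypothesis phi_AB : forall T, A T -> B (phi T).
Hypothesis phi_quadratic : forall T : opmx2 X, in_alg2 A T ->
  (quadratic2 T <-> quadratic2 (phi2 phi T)).
Hypothesis phi_id : phi id = id.

Lemma A_linear {T} : A T -> lin_op T.
Proof. by case: A_std => [[bnd _ _ _ _] _] /bnd []. Qed.

Lemma B_linear {S} : B S -> lin_op S.
Proof. by case: B_std => [[bnd _ _ _ _] _] /bnd []. Qed.

Lemma A_id : A id.
Proof. by case: A_std => [[]]. Qed.

Lemma A_scalar (l : R[i]) : A (fun x => l *: x).
Proof. by case: A_std => [[_ Aid _ AZ _] _]; exact: AZ. Qed.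

Lemma phi_block {E F G H} : A E -> A F -> A G -> A H ->
  quadratic2 (mk2 E F G H) <-> quadratic2 (mk2 (phi E) (phi F) (phi G) (phi H)).
Proof.
move=> AE AF AG AH.
have -> : mk2 (phi E) (phi F) (phi G) (phi H) = phi2 phi (mk2 E F G H).
  by apply: funext => i; apply: funext => j; rewrite /phi2 /mk2; do 2 case: ifP.
by apply: phi_quadratic => i j; rewrite /mk2; do 2 case: ifP.
Qed.

(* phi reflects scalars, through the matrix [[T, 1], [1, T]] ... *)
Lemma phi_scalar_reflect {T} : A T -> scalar_op (phi T) -> scalar_op T.
Proof.
move=> AT [c phiT]; apply: block_quadratic_scalar.
apply/(phi_block AT A_id A_id AT); rewrite phi_id.
by rewrite (_ : phi T = fun y => c *: y); [exact: scalar_block_quadratic | exact: funext].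
Qed.

Lemma phi_scalar (l : R[i]) : scalar_op (phi (fun x => l *: x)).
Proof.
apply: block_quadratic_scalar; rewrite -[in W in mk2 _ W]phi_id -[in W in mk2 _ _ W]phi_id.
by apply/phi_block; [exact: A_scalar | exact: A_id | exact: A_id |
  exact: A_scalar | exact: scalar_block_quadratic].
Qed.

(* phi 0 = 0: 0 is orthogonal to a non-scalar N, so phi 0 * phi N is a
   scalar; if phi 0 were a nonzero scalar, phi N and then N would be scalar. *)
Lemma phi_zero y : phi (fun x => 0 *: x) y = 0.
Proof.
have [N AN N_nonscalar] := standard_algebra_nonscalar infX A_std.
have [c phi0] := phi_scalar 0.
have orth0N : quadratic2 (mk2 id (fun x => 0 *: x) N id).
  apply: orth_block_quadratic _ (A_linear AN) _ _.
  - by move=> a u v; rewrite !scale0r scaler0 addr0.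
  - by move=> x; rewrite scale0r.
  - by move=> x; rewrite scale0r (lin_op0 (A_linear AN)).
move/(phi_block A_id (A_scalar 0) AN A_id): orth0N; rewrite phi_id.
move=> /block_quadratic_orth [t phi0N].
have [c0|c_neq0] := eqVneq c 0; first by rewrite phi0 c0 scale0r.
exfalso; apply/N_nonscalar/phi_scalar_reflect => //; exists (t / c) => z.
have [+ _] := phi0N z; rewrite phi0 => cN.
by rewrite mulrC -scalerA -cN scalerA mulVf // scale1r.
Qed.

Lemma phi_idempotent_range {E} : A E -> idempotent_opr E ->
  exists c, forall y, phi E (phi E y) = c *: phi E y.
Proof.
move=> AE EE; apply: (block_quadratic_range_scalar (B_linear (phi_AB _ AE))).
exact/(phi_block AE AE AE AE)/idempotent_block_quadratic.
Qed.

(* Both directions start from [[1, P], [Q, 1]]: its quadraticity on one side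
   yields PQ = QP = t on the other, and it remains to show that t = 0. *)
Lemma orth_preserved P Q : A P -> A Q -> idempotent_opr P -> idempotent_opr Q ->
  P \o Q = (fun _ => 0) -> Q \o P = (fun _ => 0) ->
  phi P \o phi Q = (fun _ => 0) /\ phi Q \o phi P = (fun _ => 0).
Proof.
move=> AP AQ PP QQ PQ QP.
have := orth_block_quadratic (A_linear AP) (A_linear AQ)
  (fun x => congr1 (@^~ x) PQ) (fun x => congr1 (@^~ x) QP).
move/(phi_block A_id AP AQ A_id); rewrite phi_id => /block_quadratic_orth [t phiPQ].
have [t0|t_neq0] := eqVneq t 0.
  by split; apply: funext => y /=; have [e1 e2] := phiPQ y; rewrite ?e1 ?e2 t0 scale0r.
exfalso.
(* If t != 0, phi P and phi Q are scalars: each acts as a scalar on its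
   range and has a right inverse up to t.  Hence so are P and Q. *)
have [[c Pc] [d Qd]] := (phi_idempotent_range AP PP, phi_idempotent_range AQ QQ).
have [l Pl] := phi_scalar_reflect AP
  (ex_intro _ c (range_scalar_surjective t_neq0 Pc (fun y => (phiPQ y).1))).
have [m Qm] := phi_scalar_reflect AQ
  (ex_intro _ d (range_scalar_surjective t_neq0 Qd (fun y => (phiPQ y).2))).
(* As PQ = 0, one of P, Q is the zero operator, whose image is 0 (phi_zero);
   this contradicts phi P phi Q = phi Q phi P = t != 0. *)
have [x0 x0_neq0] := nonzero_vector infX.
have [y0 y0_neq0] := nonzero_vector infY.
have phi_nonzero (E F : X -> X) :
    (forall y, phi E (phi F y) = t *: y) -> E <> (fun x => 0 *: x).
  move=> EF E0; have /esym/eqP := EF y0; rewrite E0 phi_zero.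
  by rewrite scaler_eq0 (negbTE t_neq0) (negbTE y0_neq0).
have [P0|Q0] := orth_scalar_zero x0_neq0 Pl Qm (congr1 (@^~ x0) PQ).
  exact: (phi_nonzero P Q (fun y => (phiPQ y).1) P0).
exact: (phi_nonzero Q P (fun y => (phiPQ y).2) Q0).
Qed.

Lemma orth_reflected P Q : A P -> A Q -> idempotent_opr P -> idempotent_opr Q ->
  phi P \o phi Q = (fun _ => 0) -> phi Q \o phi P = (fun _ => 0) ->
  P \o Q = (fun _ => 0) /\ Q \o P = (fun _ => 0).
Proof.
move=> AP AQ PP QQ PQ QP.
have := orth_block_quadratic (B_linear (phi_AB _ AP)) (B_linear (phi_AB _ AQ))
  (fun y => congr1 (@^~ y) PQ) (fun y => congr1 (@^~ y) QP).
rewrite -phi_id => /(phi_block A_id AP AQ A_id) /block_quadratic_orth [t PQt].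
have [t0|t_neq0] := eqVneq t 0.
  by split; apply: funext => x /=; have [e1 e2] := PQt x; rewrite ?e1 ?e2 t0 scale0r.
(* If t != 0, the idempotents P and Q have right inverses, so P = Q = 1,
   and then phi P phi Q = 1 is not 0. *)
have is_id (E F : X -> X) : idempotent_opr E -> (forall x, E (F x) = t *: x) -> E = id.
  move=> /idempotent_oprP EE EF; apply: funext => x.
  have EE1 z : E (E z) = 1 *: E z by rewrite scale1r EE.
  by rewrite (range_scalar_surjective t_neq0 EE1 EF) scale1r.
have [y0 y0_neq0] := nonzero_vector infY.
have := congr1 (@^~ y0) PQ.
rewrite (is_id P Q PP (fun x => (PQt x).1)) (is_id Q P QQ (fun x => (PQt x).2)).
by rewrite phi_id => /= y00; rewrite y00 eqxx in y0_neq0.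
Qed.

End Preserver.
Arguments orth_preserved {R X Y A B phi}. Arguments orth_reflected {R X Y A B phi}.

Theorem lemma2p4 (R : realType)
  (X Y : completeNormedModType (R[i])%C)
  (A : set (X -> X)) (B : set (Y -> Y))
  (phi : (X -> X) -> (Y -> Y)) :
  infinite_dim X -> infinite_dim Y ->
  standard_operator_algebra A -> standard_operator_algebra B ->
  (forall T, A T -> B (phi T)) ->
  {in A &, injective phi} ->
  (forall S, B S -> exists2 T, A T & phi T = S) ->
  (forall T : opmx2 X, in_alg2 A T ->
     (quadratic2 T <-> quadratic2 (phi2 phi T))) ->
  phi id = id ->
  forall P Q, A P -> A Q -> idempotent_opr P -> idempotent_opr Q ->
    ((P \o Q = (fun _ => 0) /\ Q \o P = (fun _ => 0)) <->
     (phi P \o phi Q = (fun _ => 0) /\ phi Q \o phi P = (fun _ => 0))).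
Proof.
move=> infX infY A_std B_std phi_AB _ _ phi_quad phi_id P Q AP AQ PP QQ.
split=> -[PQ QP].
- exact: (orth_preserved infX infY A_std B_std phi_AB phi_quad phi_id P Q).
- exact: (orth_reflected infY A_std B_std phi_AB phi_quad phi_id P Q).
Qed.
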